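(* Let $k$ be a field of characteristic $0$. If $V$ is a finitely generated $\mathrm{FI}\sharp^m$-module, then there is a single character polynomial $P$ such that $\chi_{V_{\mathbf d}}=P$ on $S_{\mathbf d}$ for all $\mathbf d\in\mathbb{N}^m$.
   Context: $\mathrm{FI}\sharp^m$ is the category with objects $\mathbf d\in\mathbb{N}^m$ and morphisms $\mathbf x\to\mathbf y$ given by pairs $(\mathbf z,f)$ with $\mathbf z\subset\mathbf x$ and $f:\mathbf z\hookrightarrow\mathbf y$ an $m$-tuple of injections (partial injections); an $\mathrm{FI}\sharp^m$-module is a functor from it to $k$-vector spaces, finitely generated if generated by finitely many elements. $S_{\mathbf d}=S_{d_1}\times\cdots\times S_{d_m}$. A character polynomial is an element of $k[\{X^{(i)}_j\}]$, where $X^{(i)}_j$ is the class function on $S_{\mathbf d}$ (for every $\mathbf d$) counting the $j$-cycles in the $S_{d_i}$ component. *)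

From HB Require Import structures.
From mathcomp Require Import all_boot all_order all_fingroup all_algebra.
Set Implicit Arguments. Unset Strict Implicit. Unset Printing Implicit Defensive.
Import GRing.Theory.
Local Open Scope ring_scope.

Definition obj (m : nat) := m.-tuple nat.

(* Raw morphisms x -> y : an m-tuple of partial functions
   'I_(x_i) -> option 'I_(y_i) (None = "not in the domain z_i"). *)
Definition mor (m : nat) (x y : obj m) :=
  {dffun forall i : 'I_m, {ffun 'I_(tnth x i) -> option 'I_(tnth y i)}}.

Definition pinjb (a b : nat) (f : {ffun 'I_a -> option 'I_b}) : bool :=
  [forall u, forall v, ((f u != None) && (f u == f v)) ==> (u == v)].

Definition isMor (m : nat) (x y : obj m) (f : mor x y) : bool :=
  [forall i, pinjb (f i)].

Definition idm (m : nat) (x : obj m) : mor x x :=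
  [ffun i => [ffun a => Some a]].

Definition comp (m : nat) (x y z : obj m) (g : mor y z) (f : mor x y) : mor x z :=
  [ffun i => [ffun a => obind (g i) (f i a)]].

(* An FI#^m-module over k, with each V_d a finite-dimensional k-space
   k^(dimV d) (row vectors); a morphism f acts by v |-> v *m act f. *)
Record FIsharp_mod (k : fieldType) (m : nat) := FIsharpMod {
  dimV : obj m -> nat;
  act : forall x y : obj m, mor x y -> 'M[k]_(dimV x, dimV y);
  act_id : forall x, act (idm x) = 1%:M;
  act_comp : forall (x y z : obj m) (f : mor x y) (g : mor y z),
      isMor f -> isMor g -> act (comp g f) = act f *m act g
}.

Definition fin_gen (k : fieldType) (m : nat) (V : FIsharp_mod k m) : Prop :=
  exists gens : seq {x : obj m & 'rV[k]_(dimV V x)},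
    forall y : obj m,
      (1%:M <= (\sum_(g <- gens)
                  (\sum_(f : mor (tag g) y | isMor f)
                     <<tagged g *m act V f>>)%MS)%MS)%MS.

Definition Sd (m : nat) (d : obj m) :=
  {dffun forall i : 'I_m, {perm 'I_(tnth d i)}}.

Definition permmor (m : nat) (d : obj m) (s : Sd d) : mor d d :=
  [ffun i => [ffun a => Some (s i a)]].

Definition character (k : fieldType) (m : nat) (V : FIsharp_mod k m)
  (d : obj m) (s : Sd d) : k := \tr (act V (permmor s)).

(* number of j-cycles of a permutation (fixed points are 1-cycles) *)
Definition ncycles (n j : nat) (s : {perm 'I_n}) : nat :=
  #|[set C in porbits s | #|C| == j]|.

Definition Xvar (m : nat) (i : 'I_m) (j : nat) (d : obj m) (s : Sd d) : nat :=
  ncycles j (s i).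

(* Character polynomials: elements of k[{X^{(i)}_j : i < m, j >= 1}],
   represented as finite sums of coefficient * monomial, a monomial being a
   list of variables (i, j) (with repetition), the pair (i, j) standing for
   X^{(i)}_{j+1}. *)
Definition charpoly (k : fieldType) (m : nat) := seq (k * seq ('I_m * nat)).

Definition cp_eval (k : fieldType) (m : nat) (P : charpoly k m)
  (d : obj m) (s : Sd d) : k :=
  \sum_(t <- P) t.1 * \prod_(v <- t.2) (Xvar v.1 v.2.+1 s)%:R.

From Stdlib Require Import Classical.
From HB Require Import structures.
From mathcomp Require Import all_boot all_order all_fingroup all_algebra.
Set Implicit Arguments. Unset Strict Implicit. Unset Printing Implicit Defensive.
Import GRing.Theory.

(* For a subset T of the points of d (the disjoint union of the sets [d_i]),
   the partial identities on T act on V_d by commuting idempotents A_T with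
   A_T A_U = A_(T :&: U); Moebius inversion turns them into orthogonal
   idempotents e_T = \sum_(U \subset T) (-1)^|T\U| A_U summing to 1, so that
   chi(s) = \sum_T tr(s e_T).  A term vanishes unless T is s-stable, and
   e_T = 0 once |T| exceeds the degrees of the generators.  For stable T the
   trace tr(s e_T) only depends on the cycle type of s restricted to T, since
   a conjugating partial bijection transports it; and the number of stable T
   with a given cycle type is a product of binomial coefficients in the cycle
   counts of s.  Hence chi is a finite combination of such products, i.e. a
   character polynomial (binomials are polynomials in characteristic 0). *)

(** * Character polynomials *)

Section CharacterPolynomials.
Local Open Scope ring_scope.

Lemma natr_ffact (R : pzRingType) (n r : nat) :
  (n ^_ r)%:R = \prod_(0 <= t < r) (n%:R - t%:R : R).
Proof.
elim: r => [|r IH]; first by rewrite big_geq // ffactn0.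
rewrite big_nat_recr //= -IH ffactnSr natrM.
case: (leqP r n) => [le_rn|lt_nr]; first by rewrite natrB.
by rewrite ffact_small // !mul0r.
Qed.

Variables (k : fieldType) (m : nat).
Implicit Types (P Q : charpoly k m).

Definition cp_mul P Q : charpoly k m := [seq (a.1 * b.1, a.2 ++ b.2) | a <- P, b <- Q].
Definition cp_const (c : k) : charpoly k m := [:: (c, [::])].
Definition cp_var (v : 'I_m * nat) : charpoly k m := [:: (1, [:: v])].
Definition cp_sum (I : Type) (r : seq I) (F : I -> charpoly k m) : charpoly k m :=
  flatten (map F r).
Definition cp_prod (I : Type) (r : seq I) (F : I -> charpoly k m) : charpoly k m :=
  foldr (fun i P => cp_mul (F i) P) (cp_const 1) r.

Variables (d : obj m) (s : Sd d).

Lemma cp_eval_cat P Q : cp_eval (P ++ Q) s = cp_eval P s + cp_eval Q s.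
Proof. by rewrite /cp_eval big_cat. Qed.

Lemma cp_eval_mul P Q : cp_eval (cp_mul P Q) s = cp_eval P s * cp_eval Q s.
Proof.
rewrite /cp_eval /cp_mul big_allpairs_dep big_distrl /=; apply: eq_bigr => a _.
rewrite big_distrr /=; apply: eq_bigr => b _ /=.
rewrite big_cat /= -!mulrA; congr (_ * _); exact: mulrCA.
Qed.

Lemma cp_eval_const c : cp_eval (cp_const c) s = c.
Proof. by rewrite /cp_eval big_seq1 /= big_nil mulr1. Qed.

Lemma cp_eval_var v : cp_eval (cp_var v) s = (Xvar v.1 v.2.+1 s)%:R.
Proof. by rewrite /cp_eval big_seq1 /= big_seq1 mul1r. Qed.

Lemma cp_eval_sum (I : Type) (r : seq I) F :
  cp_eval (cp_sum r F) s = \sum_(i <- r) cp_eval (F i) s.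
Proof.
elim: r => [|i r IH]; first by rewrite /cp_eval !big_nil.
by rewrite /cp_sum /= cp_eval_cat big_cons -IH.
Qed.

Lemma cp_eval_prod (I : Type) (r : seq I) F :
  cp_eval (cp_prod r F) s = \prod_(i <- r) cp_eval (F i) s.
Proof.
elim: r => [|i r IH]; first by rewrite big_nil cp_eval_const.
by rewrite /cp_prod /= cp_eval_mul big_cons -IH.
Qed.

Definition cp_binom (v : 'I_m * nat) (r : nat) : charpoly k m :=
  cp_mul (cp_const (r`!%:R)^-1)
    (cp_prod (iota 0 r) (fun t => cp_var v ++ cp_const (- t%:R))).

Lemma cp_eval_binom v r :
  [pchar k] =i pred0 ->
  cp_eval (cp_binom v r) s = ('C(Xvar v.1 v.2.+1 s, r))%:R.
Proof.
move=> /pcharf0P char0.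
rewrite /cp_binom cp_eval_mul cp_eval_const cp_eval_prod.
have -> : \prod_(t <- iota 0 r) cp_eval (cp_var v ++ cp_const (- t%:R)) s
    = \prod_(0 <= t < r) ((Xvar v.1 v.2.+1 s)%:R - t%:R).
  rewrite /index_iota subn0; apply: eq_bigr => t _.
  by rewrite cp_eval_cat cp_eval_var cp_eval_const.
rewrite -natr_ffact -bin_ffact natrM mulrC mulrK //.
by rewrite unitfE char0 -lt0n fact_gt0.
Qed.

End CharacterPolynomials.

Arguments cp_const {k m} c.
Arguments cp_var {k m} v.
Arguments cp_binom {k m} v r.

(** * Idempotents attached to subsets of points *)

Lemma sum_toggle_eq0 (T : finType) (M : zmodType) (P : pred {set T})
    (F : {set T} -> M) (p : T) :
  (forall X : {set T}, p \notin X -> P (p |: X) = P X) ->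
  (forall X : {set T}, p \notin X -> F (p |: X) = (- F X)%R) ->
  (\sum_(X | P X) F X = 0)%R.
Proof.
move=> HP HF.
rewrite (bigID (fun X : {set T} => p \in X)) /=.
rewrite (reindex_onto (fun Y => p |: Y) (fun X => X :\ p)) /=; last first.
  by move=> X /andP[_ pX]; rewrite setD1K.
rewrite (eq_bigl (fun X => P X && (p \notin X))); last first.
  move=> X /=; rewrite setU11 andbT.
  case pX: (p \in X) => /=.
    rewrite andbF; apply/negbTE; rewrite negb_and; apply/orP; right; apply/eqP => E.
    by move: pX; rewrite -E setD11.
  by rewrite setU1K ?pX // eqxx HP ?pX // andbT.
rewrite -big_split /=; apply: big1 => X /andP[_ pX].
by rewrite HF // addNr.
Qed.

Section Points.
Variable m : nat.

Definition point (d : obj m) := {i : 'I_m & 'I_(tnth d i)}.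
Definition pt (d : obj m) (i : 'I_m) (a : 'I_(tnth d i)) : point d :=
  Tagged (fun i => 'I_(tnth d i)) a.

Lemma pt_inj (d : obj m) (i : 'I_m) : injective (@pt d i).
Proof. by move=> a b E; apply: eq_from_Tagged E. Qed.

Lemma pt_tagged (d : obj m) (q : point d) : pt (tagged q) = q.
Proof. by case: q. Qed.

Definition restr_mor (d : obj m) (T : {set point d}) : mor d d :=
  [ffun i => [ffun a => if pt a \in T then Some a else None]].

Lemma restr_morE d (T : {set point d}) i (a : 'I_(tnth d i)) :
  restr_mor T i a = if pt a \in T then Some a else None.
Proof. by rewrite !ffunE. Qed.

Lemma compE (x y z : obj m) (g : mor y z) (f : mor x y) i (a : 'I_(tnth x i)) :
  comp g f i a = obind (g i) (f i a).
Proof. by rewrite !ffunE. Qed.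

Lemma permmorE d (s : Sd (m:=m) d) i (a : 'I_(tnth d i)) : permmor s i a = Some (s i a).
Proof. by rewrite !ffunE. Qed.

Lemma eq_mor (x y : obj m) (f g : mor x y) :
  (forall i (a : 'I_(tnth x i)), f i a = g i a) -> f = g.
Proof. by move=> fg; apply/ffunP => i; apply/ffunP => a; apply: fg. Qed.

Lemma isMorP (x y : obj m) (f : mor x y) :
  reflect (forall i (u v : 'I_(tnth x i)), f i u != None -> f i u = f i v -> u = v)
          (isMor f).
Proof.
apply: (iffP forallP) => [H i u v nu uv | H i].
  by move: (H i) => /forallP/(_ u)/forallP/(_ v)/implyP; rewrite nu uv eqxx => /(_ isT)/eqP.
apply/forallP => u; apply/forallP => v; apply/implyP => /andP[nu /eqP uv].
by apply/eqP; apply: H.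
Qed.

Lemma isMor_restr d (T : {set point d}) : isMor (restr_mor T).
Proof.
apply/isMorP => i u v; rewrite !restr_morE.
by case: ifP => // _ _; case: ifP => // _ [].
Qed.

Lemma isMor_permmor d (s : Sd (m:=m) d) : isMor (permmor s).
Proof. by apply/isMorP => i u v; rewrite !permmorE => _ [] /perm_inj. Qed.

Lemma isMor_comp (x y z : obj m) (g : mor y z) (f : mor x y) :
  isMor f -> isMor g -> isMor (comp g f).
Proof.
move=> /isMorP Hf /isMorP Hg; apply/isMorP => i u v; rewrite !compE.
case fu: (f i u) => [a|] //=; case fv: (f i v) => [b|] /=; last by move=> + E; rewrite E.
move=> nga gab; have ab := Hg i a b nga gab.
by apply: (Hf i); rewrite ?fu ?fv ?ab.
Qed.

Lemma restr_morI d (T U : {set point d}) :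
  comp (restr_mor U) (restr_mor T) = restr_mor (T :&: U).
Proof.
apply: eq_mor => i a; rewrite compE !restr_morE inE.
by case: (pt a \in T) => //=; rewrite restr_morE.
Qed.

Lemma restr_morT d : restr_mor [set: point d] = idm d.
Proof. by apply: eq_mor => i a; rewrite restr_morE inE !ffunE. Qed.

Definition perm_point_fun d (s : Sd (m:=m) d) (p : point d) : point d :=
  pt (s (tag p) (tagged p)).

Lemma perm_point_inj d (s : Sd (m:=m) d) : injective (perm_point_fun s).
Proof.
move=> [i a] [j b]; rewrite /perm_point_fun /pt /= => E.
have ij : i = j := congr1 tag E; subst j.
by have /perm_inj -> := eq_from_Tagged E.
Qed.

Definition perm_point d (s : Sd (m:=m) d) : {perm point d} := perm (@perm_point_inj d s).

Lemma perm_point_pt d (s : Sd (m:=m) d) i (a : 'I_(tnth d i)) :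
  perm_point s (pt a) = pt (s i a).
Proof. by rewrite permE. Qed.

Definition stable d (s : Sd (m:=m) d) (T : {set point d}) := perm_point s @: T \subset T.

End Points.

Section Idempotents.
Local Open Scope ring_scope.
Variables (k : fieldType) (m : nat) (V : FIsharp_mod k m).

Definition restr_act d (T : {set point d}) := act V (restr_mor T).
Definition perm_act d (s : Sd (m:=m) d) := act V (permmor s).

Lemma restr_actM d (T U : {set point d}) :
  restr_act T *m restr_act U = restr_act (T :&: U).
Proof. by rewrite /restr_act -act_comp ?isMor_restr // restr_morI. Qed.

Lemma restr_actT d : restr_act [set: point d] = 1%:M.
Proof. by rewrite /restr_act restr_morT act_id. Qed.

Lemma restr_act_perm d (s : Sd (m:=m) d) (T : {set point d}) :
  restr_act T *m perm_act s = perm_act s *m restr_act (perm_point s @: T).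
Proof.
rewrite /restr_act /perm_act -!act_comp ?isMor_restr ?isMor_permmor //.
congr (act V _); apply: eq_mor => i a.
rewrite !compE restr_morE permmorE /= restr_morE -perm_point_pt mem_imset //.
  by case: ifP => // _; rewrite /= permmorE.
exact: perm_inj.
Qed.

Definition setsign (T : finType) (X : {set T}) : k := (-1) ^+ #|X|.

Lemma setsignU1 (T : finType) (X : {set T}) p :
  p \notin X -> setsign (p |: X) = - setsign X.
Proof. by move=> pX; rewrite /setsign cardsU1 pX exprS mulN1r. Qed.

Definition idem d (T : {set point d}) :=
  \sum_(U : {set point d} | U \subset T) (setsign T * setsign U) *: restr_act U.

Lemma sum_idem d : \sum_(T : {set point d}) idem T = 1%:M.
Proof.
rewrite /idem (exchange_big_dep predT) //=.
rewrite (bigD1 [set: point d]) //= [X in _ + X = _]big1 ?addr0; last first.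
  move=> U /negbTE UT.
  have [p pU] : exists p, p \notin U.
    apply/existsP; move: UT; apply: contraFT; rewrite negb_exists => /forallP H.
    by apply/eqP/setP => p; move: (H p); rewrite !inE negbK => ->.
  rewrite -scaler_suml.
  rewrite (sum_toggle_eq0 (P := fun T => U \subset T) (F := fun T => setsign T * setsign U)
    (p := p)) ?scale0r //.
  - move=> X pX; apply/idP/idP => H; last exact: (subset_trans H (subsetUr _ _)).
    apply/subsetP => x xU; move/subsetP: H => /(_ x xU).
    by case/setU1P => // E; move: pU; rewrite -E xU.
  - by move=> X pX; rewrite setsignU1 // mulNr.
rewrite (big_pred1 [set: point d]); last by move=> T /=; rewrite subTset.
by rewrite /setsign -exprD addnn -mul2n exprM sqrrN !expr1n scale1r restr_actT.
Qed.

Lemma idem_restr_act d (T W : {set point d}) :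
  idem T *m restr_act W =
  \sum_(U : {set point d} | U \subset T) (setsign T * setsign U) *: restr_act (U :&: W).
Proof. by rewrite /idem mulmx_suml; apply: eq_bigr => U _; rewrite -scalemxAl restr_actM. Qed.

Lemma restr_act_idemC d (T W : {set point d}) :
  restr_act W *m idem T = idem T *m restr_act W.
Proof.
rewrite idem_restr_act /idem mulmx_sumr; apply: eq_bigr => U _.
by rewrite -scalemxAr restr_actM setIC.
Qed.

Lemma idem_restr_act0 d (T W : {set point d}) :
  ~~ (T \subset W) -> idem T *m restr_act W = 0.
Proof.
move=> TW; have [p /setDP[pT pW]] : exists p, p \in T :\: W.
  by apply/set0Pn; rewrite setD_eq0.
rewrite idem_restr_act (sum_toggle_eq0 (P := fun U => U \subset T)
   (F := fun U => (setsign T * setsign U) *: restr_act (U :&: W)) (p := p)) //.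
- by move=> X pX; rewrite subUset sub1set pT.
- move=> X pX; rewrite setsignU1 // mulrN scaleNr; congr (- (_ *: _)).
  rewrite setIUl; congr (restr_act _).
  apply/setP => q; rewrite !inE; case: eqP => // -> /=.
  by rewrite (negbTE pW).
Qed.

Lemma idem_restr_actT d (T : {set point d}) : idem T *m restr_act T = idem T.
Proof.
rewrite idem_restr_act /idem; apply: eq_bigr => U UT.
by move/setIidPl: UT => ->.
Qed.

Definition trace_idem d (s : Sd (m:=m) d) (T : {set point d}) := \tr (perm_act s *m idem T).

Lemma character_sum_trace_idem d (s : Sd (m:=m) d) :
  character V s = \sum_(T : {set point d}) trace_idem s T.
Proof.
by rewrite /character -[act V _]mulmx1 -sum_idem mulmx_sumr raddf_sum.
Qed.

(* tr(s e_T) = tr(s A_(s T) e_T), and e_T A_W = 0 unless T \subset W. *)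
Lemma trace_idem_unstable d (s : Sd (m:=m) d) (T : {set point d}) :
  ~~ stable s T -> trace_idem s T = 0.
Proof.
move=> unstable_T.
rewrite /trace_idem -idem_restr_actT mulmxA mxtrace_mulC mulmxA restr_act_perm.
rewrite -mulmxA restr_act_idemC idem_restr_act0 ?mulmx0 ?mxtrace0 //.
apply: contra unstable_T => sub.
have : T == perm_point s @: T.
  by rewrite eqEcard sub /= (card_imset _ (@perm_inj _ (perm_point s))).
by rewrite /stable => /eqP <-.
Qed.

Definition image_points (x d : obj m) (f : mor x d) : {set point d} :=
  [set q : point d | [exists a : 'I_(tnth x (tag q)), f (tag q) a == Some (tagged q)]].

Lemma card_image_points (x d : obj m) (f : mor x d) :
  (#|image_points f| <= #|{: point x}|)%N.
Proof.
pose g := fun p : point x => omap (@pt m d (tag p)) (f (tag p) (tagged p)).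
rewrite -(card_imset _ (@Some_inj _)).
apply: (leq_trans _ (leq_imset_card g _)); apply: subset_leq_card.
apply/subsetP => _ /imsetP[q qI ->]; move: qI; rewrite inE => /existsP[a /eqP fa].
by apply/imsetP; exists (pt a) => //; rewrite /g /= fa /= pt_tagged.
Qed.

(* A point of T outside the image of f toggles the alternating sum to zero. *)
Lemma act_idem_eq0 (x d : obj m) (f : mor x d) (T : {set point d}) :
  isMor f -> (#|{: point x}| < #|T|)%N -> act V f *m idem T = 0.
Proof.
move=> Mf big.
have [p /setDP[pT pI]] : exists p, p \in T :\: image_points f.
  apply/set0Pn; rewrite setD_eq0; apply: contraL big => sub.
  by rewrite -leqNgt (leq_trans (subset_leq_card sub)) ?card_image_points.
rewrite /idem mulmx_sumr.
rewrite (eq_bigr (fun U => (setsign T * setsign U) *: act V (comp (restr_mor U) f)));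
  last by move=> U _; rewrite -scalemxAr /restr_act act_comp ?isMor_restr.
rewrite (sum_toggle_eq0 (P := fun U => U \subset T)
   (F := fun U => (setsign T * setsign U) *: act V (comp (restr_mor U) f)) (p := p)) //.
- by move=> X pX; rewrite subUset sub1set pT.
- move=> X pX; rewrite setsignU1 // mulrN scaleNr; congr (- (_ *: act V _)).
  apply: eq_mor => i a; rewrite !compE.
  case fa: (f i a) => [b|] //=; rewrite !restr_morE !inE.
  case: eqP => //= E; move: pI; rewrite -E inE; case/existsP; exists a.
  by rewrite fa.
Qed.

Lemma idem_eq0_large : fin_gen V ->
  exists N, forall d (T : {set point d}), (N < #|T|)%N -> idem T = 0.
Proof.
case=> gens span; exists (\max_(g <- gens) #|{: point (tag g)}|) => d T big.
have : (1%:M <= kermx (idem T))%MS.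
  apply: submx_trans (span d) _; rewrite big_seq.
  apply: (big_ind (fun X => X <= kermx (idem T))%MS); first exact: sub0mx.
    by move=> X Y HX HY; rewrite addsmx_sub HX.
  move=> g gin; apply/sumsmx_subP => f Mf.
  rewrite genmxE sub_kermx -mulmxA act_idem_eq0 ?mulmx0 //.
  apply: leq_ltn_trans big.
  exact: (@leq_bigmax_seq _ gens predT (fun g => #|{: point (tag g)}|)).
by rewrite sub_kermx mul1mx => /eqP.
Qed.

Section Transport.
Variables (d d' : obj m) (s : Sd (m:=m) d) (s' : Sd (m:=m) d') (T : {set point d}) (T' : {set point d'}).
Variable fw : forall i : 'I_m, 'I_(tnth d i) -> option 'I_(tnth d' i).
Variable bw : forall i : 'I_m, 'I_(tnth d' i) -> option 'I_(tnth d i).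
Hypothesis fw_out : forall i (a : 'I_(tnth d i)), pt a \notin T -> fw a = None.
Hypothesis bw_out : forall i (b : 'I_(tnth d' i)), pt b \notin T' -> bw b = None.
Hypothesis fw_in : forall i (a : 'I_(tnth d i)),
  pt a \in T -> exists b, fw a = Some b /\ bw b = Some a.
Hypothesis bw_in : forall i (b : 'I_(tnth d' i)),
  pt b \in T' -> exists a, bw b = Some a /\ fw a = Some b.
Hypothesis fw_perm : forall i (a : 'I_(tnth d i)),
  pt a \in T -> fw (s i a) = omap (s' i) (fw a).

Lemma fw_someP i (a : 'I_(tnth d i)) b :
  fw a = Some b -> [/\ bw b = Some a, pt a \in T & pt b \in T'].
Proof.
move=> E.
have aT : pt a \in T by apply: contraTT isT => /fw_out; rewrite E.
have [b0 [E0 G0]] := fw_in aT; move: E0; rewrite E => -[Eb]; subst b0.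
by split=> //; apply: contraTT isT => /bw_out; rewrite G0.
Qed.

Lemma bw_someP i (b : 'I_(tnth d' i)) a :
  bw b = Some a -> [/\ fw a = Some b, pt a \in T & pt b \in T'].
Proof.
move=> E.
have bT : pt b \in T' by apply: contraTT isT => /bw_out; rewrite E.
have [a0 [E0 G0]] := bw_in bT; move: E0; rewrite E => -[Eb]; subst a0.
by split=> //; apply: contraTT isT => /fw_out; rewrite G0.
Qed.

Definition fw_mor : mor d d' := [ffun i => [ffun a => fw a]].
Definition bw_mor : mor d' d := [ffun i => [ffun b => bw b]].

Lemma fw_morE i (a : 'I_(tnth d i)) : fw_mor i a = fw a.
Proof. by rewrite !ffunE. Qed.

Lemma bw_morE i (b : 'I_(tnth d' i)) : bw_mor i b = bw b.
Proof. by rewrite !ffunE. Qed.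

Lemma isMor_fw : isMor fw_mor.
Proof.
apply/isMorP => i u v; rewrite !ffunE.
case E: (fw u) => [b|] // _ /esym Ev.
by have [G1 _ _] := fw_someP E; have [G2 _ _] := fw_someP Ev; move: G1; rewrite G2 => -[].
Qed.

Lemma isMor_bw : isMor bw_mor.
Proof.
apply/isMorP => i u v; rewrite !ffunE.
case E: (bw u) => [b|] // _ /esym Ev.
by have [G1 _ _] := bw_someP E; have [G2 _ _] := bw_someP Ev; move: G1; rewrite G2 => -[].
Qed.

Definition pull_set (U' : {set point d'}) : {set point d} :=
  [set p : point d | if fw (tagged p) is Some b then pt b \in U' else false].
Definition push_set (U : {set point d}) : {set point d'} :=
  [set q : point d' | if bw (tagged q) is Some a then pt a \in U else false].

Lemma comp_bw_restr_fw (U' : {set point d'}) :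
  comp bw_mor (comp (restr_mor U') fw_mor) = restr_mor (pull_set U').
Proof.
apply: eq_mor => i a; rewrite !compE fw_morE restr_morE inE /=.
case E: (fw a) => [b|] //=; rewrite restr_morE.
by case: ifP => //= _; rewrite bw_morE; case: (fw_someP E).
Qed.

Lemma push_setK (U : {set point d}) : U \subset T -> pull_set (push_set U) = U.
Proof.
move=> UT; apply/setP => -[i a]; rewrite !inE /=.
case E: (fw a) => [b|]; rewrite ?inE /=; first by have [-> _ _] := fw_someP E.
apply/esym/negbTE/negP => aU.
by have [b [E' _]] := fw_in (subsetP UT _ aU); rewrite E' in E.
Qed.

Lemma pull_setK (U' : {set point d'}) : push_set (pull_set U') = U' :&: T'.
Proof.
apply/setP => -[i b]; rewrite !inE /=.
case E: (bw b) => [a|]; rewrite ?inE /=; first by have [-> _ ->] := bw_someP E; rewrite andbT.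
apply/esym/negbTE; rewrite negb_and orbC; apply/orP; left.
by apply/negP => bT; have [a [E' _]] := bw_in bT; rewrite E' in E.
Qed.

Lemma pull_set_sub (U' : {set point d'}) : pull_set U' \subset T.
Proof.
apply/subsetP => -[i a]; rewrite inE /=.
by case E: (fw a) => [b|] // _; case: (fw_someP E).
Qed.

Lemma card_pull_set (U' : {set point d'}) : U' \subset T' -> #|pull_set U'| = #|U'|.
Proof.
move=> UT.
pose fwp := fun p : point d => omap (@pt m d' (tag p)) (fw (tagged p)).
have inj : {in pull_set U' &, injective fwp}.
  move=> [i a] [j a'] /=; rewrite !inE /= /fwp /=.
  case E: (fw a) => [b|] // _; case E': (fw a') => [b'|] // _ /Some_inj Eb.
  have ij : i = j := congr1 tag Eb; subst j.
  have bb := eq_from_Tagged Eb; subst b'.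
  by have [G1 _ _] := fw_someP E; have [G2 _ _] := fw_someP E'; move: G1; rewrite G2 => -[->].
rewrite -(card_in_imset inj) -(card_imset U' (@Some_inj _)).
apply: eq_card => q; apply/imsetP/imsetP.
  case=> -[i a]; rewrite inE /= /fwp /=; case E: (fw a) => [b|] // bU ->.
  by exists (pt b).
case=> -[i b] bU ->; have [a [G E]] := bw_in (subsetP UT _ bU).
by exists (pt a); rewrite ?inE /= /fwp /= E.
Qed.

Lemma pull_set_T : pull_set T' = T.
Proof.
apply/setP => -[i a]; rewrite inE /=.
case E: (fw _) => [b|]; first by have [_ aT bT] := fw_someP E; rewrite bT; symmetry.
apply/esym/negbTE/negP => aT.
by have [b [E' _]] := fw_in aT; rewrite E' in E.
Qed.

Lemma idem_transport : idem T = act V fw_mor *m idem T' *m act V bw_mor.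
Proof.
rewrite /idem mulmx_sumr mulmx_suml.
rewrite [RHS](eq_bigr (fun U' => (setsign T' * setsign U') *: restr_act (pull_set U')));
  last first.
  move=> U' _; rewrite -scalemxAr -scalemxAl /restr_act.
  by rewrite -!act_comp ?isMor_comp ?isMor_fw ?isMor_bw ?isMor_restr // comp_bw_restr_fw.
rewrite (reindex_onto pull_set push_set) /=; last by move=> U; apply: push_setK.
apply: eq_big => U'.
  rewrite pull_set_sub pull_setK /=.
  by apply/idP/idP => [/eqP <-|/setIidPl ->]; [exact: subsetIr | exact: eqxx].
move=> /andP[_ /eqP E]; have UT : U' \subset T' by rewrite -E pull_setK subsetIr.
by rewrite /setsign card_pull_set // -pull_set_T card_pull_set.
Qed.

Lemma trace_idem_transport : trace_idem s T = trace_idem s' T'.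
Proof.
rewrite /trace_idem idem_transport !mulmxA mxtrace_mulC !mulmxA.
have -> : act V bw_mor *m perm_act s *m act V fw_mor = restr_act T' *m perm_act s'.
  rewrite /perm_act /restr_act.
  rewrite -!act_comp ?isMor_comp ?isMor_fw ?isMor_bw ?isMor_restr ?isMor_permmor //.
  congr (act V _); apply: eq_mor => i b; rewrite !compE bw_morE /=.
  case G: (bw b) => [a|] /=.
    have [Eb aT bT] := bw_someP G.
    by rewrite permmorE /= fw_morE fw_perm // Eb /= restr_morE bT /= permmorE.
  rewrite restr_morE; case: ifP => // bT; have [a [Ga _]] := bw_in bT.
  by rewrite Ga in G.
by rewrite -mulmxA mxtrace_mulC -mulmxA idem_restr_actT.
Qed.

End Transport.

End Idempotents.


(** * Matching the cycles of two permutations *)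

Section PermOrbits.
Variables (A : finType) (s : {perm A}).

Lemma permXS n (x : A) : (s ^+ n.+1)%g x = s ((s ^+ n)%g x).
Proof. by rewrite !permX. Qed.

Lemma permX_mod u (x : A) : (s ^+ u)%g x = (s ^+ (u %% #|porbit s x|))%g x.
Proof.
have cycle q : (s ^+ (q * #|porbit s x|))%g x = x.
  elim: q => [|q IH]; first by rewrite mul0n expg0 perm1.
  by rewrite mulSn expgD permM (permX s x #|porbit s x|) iter_porbit IH.
by rewrite {1}(divn_eq u #|porbit s x|) expgD permM cycle.
Qed.

Lemma porbit_sub (X : {set A}) (x : A) :
  (forall a, a \in X -> s a \in X) -> x \in X -> porbit s x \subset X.
Proof.
move=> sX xX; apply/subsetP => y /porbitP[i ->].
elim: i => [|i IH]; first by rewrite expg0 perm1.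
by rewrite permXS sX.
Qed.

Lemma porbit_of_mem (C : {set A}) (x : A) : C \in porbits s -> x \in C -> porbit s x = C.
Proof. by case/imsetP => z _ -> xz; apply/eqP; rewrite eq_porbit_mem. Qed.

Lemma porbits_nonempty (C : {set A}) : C \in porbits s -> exists x, x \in C.
Proof. by case/imsetP => x _ ->; exists x; exact: porbit_id. Qed.

Lemma porbits_perm_closed (C : {set A}) x : C \in porbits s -> x \in C -> s x \in C.
Proof.
move=> Cs xC; rewrite -(porbit_of_mem Cs xC).
by have := mem_porbit s 1 x; rewrite expg1.
Qed.

Lemma index_traject_permX (x : A) n :
  n < #|porbit s x| -> index ((s ^+ n)%g x) (traject s x #|porbit s x|) = n.
Proof.
move=> n_lt.
by rewrite permX -(nth_traject _ n_lt) index_uniq ?size_traject // uniq_traject_porbit.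
Qed.

Lemma permX_index_traject (x a : A) : a \in porbit s x ->
  let n := index a (traject s x #|porbit s x|) in
  n < #|porbit s x| /\ (s ^+ n)%g x = a.
Proof.
move=> ax /=.
have n_lt : index a (traject s x #|porbit s x|) < #|porbit s x|.
  by rewrite -[X in _ < X](size_traject s x) index_mem -porbit_traject.
by split=> //; rewrite permX -(nth_traject _ n_lt) nth_index // -porbit_traject.
Qed.

End PermOrbits.

Definition cycles_in (A : finType) (s : {perm A}) (X : {set A}) (j : nat) :=
  [set C in porbits s | (C \subset X) && (#|C| == j)].

Lemma cycles_inP (A : finType) (s : {perm A}) (X : {set A}) j C :
  C \in cycles_in s X j -> [/\ C \in porbits s, C \subset X & #|C| = j].
Proof. by rewrite inE => /andP[-> /andP[-> /eqP ->]]. Qed.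

(* The n-th cycle of length j of s inside X (in enumeration order) is sent to
   the n-th cycle of length j of s' inside Y, by matching the successive images
   of a chosen base point in each. *)
Definition cycle_match (A B : finType) (s : {perm A}) (X : {set A})
    (s' : {perm B}) (Y : {set B}) (a : A) : option B :=
  if a \in X then
    let C := porbit s a in
    let j := #|C| in
    let C' := nth set0 (enum (cycles_in s' Y j)) (index C (enum (cycles_in s X j))) in
    match [pick x in C], [pick y in C'] with
    | Some x, Some y => Some ((s' ^+ (index a (traject s x j)))%g y)
    | _, _ => None
    end
  else None.

Section CycleMatchSpec.
Variables (A B : finType) (s : {perm A}) (X : {set A}) (s' : {perm B}) (Y : {set B}).
Hypothesis sX : forall a, a \in X -> s a \in X.
Hypothesis same_cycle_type : forall j, #|cycles_in s X j| = #|cycles_in s' Y j|.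

Lemma cycle_match_out a : a \notin X -> cycle_match s X s' Y a = None.
Proof. by rewrite /cycle_match => /negbTE ->. Qed.

Lemma cycle_match_spec a : a \in X ->
  exists x y (C' : {set B}),
  [/\ porbit s x = porbit s a, porbit s' y = C',
      C' = nth set0 (enum (cycles_in s' Y #|porbit s a|))
             (index (porbit s a) (enum (cycles_in s X #|porbit s a|))),
      C' \in cycles_in s' Y #|porbit s a| &
      [/\ [pick z in porbit s a] = Some x, [pick z in C'] = Some y &
      cycle_match s X s' Y a = Some ((s' ^+ (index a (traject s x #|porbit s a|)))%g y)]].
Proof.
move=> aX.
set C := porbit s a; set j := #|C|.
have CX : C \in cycles_in s X j by rewrite inE imset_f //= eqxx andbT porbit_sub.
set C' := nth set0 (enum (cycles_in s' Y j)) (index C (enum (cycles_in s X j))).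
have C'Y : C' \in cycles_in s' Y j.
  by rewrite -mem_enum mem_nth // -cardE -same_cycle_type cardE index_mem mem_enum.
have [x px xC] : exists2 x, [pick z in C] = Some x & x \in C.
  case: pickP => [x xC|H]; first by exists x.
  by move: (H a); rewrite /= porbit_id.
have [y py yC] : exists2 y, [pick z in C'] = Some y & y \in C'.
  case: pickP => [y yC|H]; first by exists y.
  have [_ _ cC'] := cycles_inP C'Y.
  have : 0 < #|C'| by rewrite cC' /j lt0n card_porbit_neq0.
  by case/card_gt0P => z zC; move: (H z); rewrite /= zC.
exists x, y, C'; split=> //.
- by apply: porbit_of_mem xC; rewrite imset_f.
- by have [C'p _ _] := cycles_inP C'Y; apply: porbit_of_mem.
- by rewrite /cycle_match aX -/C -/j -/C' px py.
Qed.

End CycleMatchSpec.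

Section CycleMatch.
Variables (A B : finType) (s : {perm A}) (X : {set A}) (s' : {perm B}) (Y : {set B}).
Hypothesis sX : forall a, a \in X -> s a \in X.
Hypothesis s'Y : forall b, b \in Y -> s' b \in Y.
Hypothesis same_cycle_type : forall j, #|cycles_in s X j| = #|cycles_in s' Y j|.

Lemma cycle_match_inv a : a \in X ->
  exists b, [/\ cycle_match s X s' Y a = Some b, cycle_match s' Y s X b = Some a & b \in Y].
Proof.
move=> aX.
have same_cycle_type' j : #|cycles_in s' Y j| = #|cycles_in s X j|.
  by rewrite same_cycle_type.
have [x [y [C' [e1 e2 e3 C'Y [px py ea]]]]] := cycle_match_spec sX same_cycle_type aX.
set j := #|porbit s a| in e3 C'Y ea.
have [C'p C'sub cC'] := cycles_inP C'Y.
have ax : a \in porbit s x by rewrite e1 porbit_id.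
have [n_lt na] := permX_index_traject ax.
rewrite e1 -/j in n_lt na ea.
set n := index a (traject s x j) in n_lt na ea.
have bY : (s' ^+ n)%g y \in Y by apply: (subsetP C'sub); rewrite -e2 mem_porbit.
exists ((s' ^+ n)%g y); split=> //.
have [x2 [y2 [C2 [f1 f2 f3 C2X [px2 py2 eb]]]]] :=
  cycle_match_spec s'Y same_cycle_type' bY.
have pb : porbit s' ((s' ^+ n)%g y) = C' by rewrite porbit_perm.
rewrite pb cC' in f3 eb; rewrite pb in px2.
have CE : porbit s a \in enum (cycles_in s X j).
  by rewrite mem_enum inE imset_f //= eqxx andbT porbit_sub.
have idx : index C' (enum (cycles_in s' Y j)) = index (porbit s a) (enum (cycles_in s X j)).
  by rewrite e3 index_uniq ?enum_uniq // -cardE -same_cycle_type cardE index_mem.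
rewrite idx nth_index // in f3; rewrite f3 in py2.
have ex2 : x2 = y by move: px2; rewrite py => -[].
have ey2 : y2 = x by move: py2; rewrite px => -[].
subst x2 y2; rewrite eb; have n_lt' : n < #|porbit s' y| by rewrite e2 cC'.
by rewrite -cC' -e2 index_traject_permX // na.
Qed.

Lemma cycle_match_perm a : a \in X ->
  cycle_match s X s' Y (s a) = omap s' (cycle_match s X s' Y a).
Proof.
move=> aX.
have [x [y [C' [e1 e2 e3 C'Y [px py ea]]]]] := cycle_match_spec sX same_cycle_type aX.
have [x2 [y2 [C2 [f1 f2 f3 C2Y [px2 py2 eb]]]]] :=
  cycle_match_spec sX same_cycle_type (sX aX).
have ps : porbit s (s a) = porbit s a by have := porbit_perm s 1 a; rewrite expg1.
rewrite ps in f1 f3 px2 eb; rewrite -e3 in f3; rewrite f3 in py2.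
have ex2 : x2 = x by move: px2; rewrite px => -[].
have ey2 : y2 = y by move: py2; rewrite py => -[].
subst x2 y2; rewrite eb ea /=.
have [_ _ cC'] := cycles_inP C'Y.
set j := #|porbit s a| in cC' ea eb *.
have ax : a \in porbit s x by rewrite e1 porbit_id.
have [n_lt na] := permX_index_traject ax.
rewrite e1 -/j in n_lt na.
set n := index a (traject s x j) in n_lt na ea *.
have jx : #|porbit s x| = j by rewrite e1.
have jy : #|porbit s' y| = j by rewrite e2.
have -> : index (s a) (traject s x j) = n.+1 %% j.
  rewrite -na -permXS permX_mod jx -{2}jx index_traject_permX // jx ltn_mod.
  by rewrite lt0n /j card_porbit_neq0.
by rewrite -jy -permX_mod permXS.
Qed.

End CycleMatch.


(** * Cycle types of stable subsets *)

Section CycleTypes.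
Variables (m : nat) (d : obj m) (s : Sd (m:=m) d).

Definition points_at (i : 'I_m) : {set point d} := [set p | tag p == i].

Definition cycles_at (T : {set point d}) (i : 'I_m) (j : nat) : {set {set point d}} :=
  [set C in porbits (perm_point s) | [&& C \subset T, C \subset points_at i & #|C| == j]].

Definition slice (T : {set point d}) (i : 'I_m) : {set 'I_(tnth d i)} := [set a | pt a \in T].

Lemma perm_pointX n i (a : 'I_(tnth d i)) : (perm_point s ^+ n)%g (pt a) = pt ((s i ^+ n)%g a).
Proof.
elim: n => [|n IH]; first by rewrite !expg0 !perm1.
by rewrite !permXS IH perm_point_pt.
Qed.

Lemma porbit_perm_point i (a : 'I_(tnth d i)) :
  porbit (perm_point s) (pt a) = (@pt m d i) @: porbit (s i) a.
Proof.
apply/setP => q; apply/porbitP/imsetP.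
  by case=> n ->; exists ((s i ^+ n)%g a); rewrite ?mem_porbit ?perm_pointX.
by case=> b /porbitP[n ->] ->; exists n; rewrite perm_pointX.
Qed.

Lemma tag_porbit (p q : point d) : q \in porbit (perm_point s) p -> tag q = tag p.
Proof. by case: p => i a; rewrite -[existT _ i a]/(pt a) porbit_perm_point => /imsetP[b _ ->]. Qed.

Lemma card_cycles_at T i j : #|cycles_at T i j| = #|cycles_in (s i) (slice T i) j|.
Proof.
rewrite -(card_imset _ (imset_inj (@pt_inj m d i))).
apply: eq_card => D; apply/idP/imsetP.
  rewrite inE => /andP[/imsetP[p _ ->] /and3P[DT Dc /eqP Dj]].
  case: p DT Dc Dj => i' a DT Dc Dj.
  have ei : i' = i.
    by move/subsetP: Dc => /(_ _ (porbit_id _ _)); rewrite inE => /eqP.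
  subst i'; rewrite -[existT _ i a]/(pt a) porbit_perm_point in DT Dj *.
  exists (porbit (s i) a) => //.
  rewrite inE imset_f //= -Dj card_imset ?eqxx ?andbT; last exact: pt_inj.
  by apply/subsetP => b bC; rewrite inE; apply: (subsetP DT); exact: imset_f.
case=> C; rewrite inE => /andP[/imsetP[a _ ->] /andP[CT /eqP Cj]] ->.
rewrite inE -porbit_perm_point imset_f //= porbit_perm_point; apply/and3P; split.
- apply/subsetP => _ /imsetP[b bC ->].
  by move/subsetP: CT => /(_ b bC); rewrite inE.
- by apply/subsetP => _ /imsetP[b _ ->]; rewrite inE.
- by rewrite card_imset ?Cj //; exact: pt_inj.
Qed.

Lemma ncycles_cycles_at i j : ncycles j (s i) = #|cycles_at setT i j|.
Proof.
rewrite card_cycles_at /ncycles; apply: eq_card => C; rewrite !inE.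
have -> : slice setT i = setT by apply/setP => a; rewrite !inE.
by rewrite subsetT.
Qed.

Lemma stable_porbit (T : {set point d}) p :
  stable s T -> p \in T -> porbit (perm_point s) p \subset T.
Proof.
move=> st; apply: porbit_sub => q qT.
by apply: (subsetP st); exact: imset_f.
Qed.

Lemma stable_slice (T : {set point d}) i :
  stable s T -> forall a, a \in slice T i -> s i a \in slice T i.
Proof.
move=> st a; rewrite !inE => aT; rewrite -perm_point_pt.
by apply: (subsetP st); exact: imset_f.
Qed.

Lemma cycles_at_inj T T' i j i' j' (C : {set point d}) :
  C \in cycles_at T i j -> C \in cycles_at T' i' j' -> i = i' /\ j = j'.
Proof.
rewrite !inE => /andP[Cs /and3P[_ Ci /eqP Cj]] /andP[_ /and3P[_ Ci' /eqP Cj']].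
have [p pC] := porbits_nonempty Cs.
move/subsetP: Ci => /(_ p pC); move/subsetP: Ci' => /(_ p pC).
by rewrite !inE => /eqP -> /eqP ->; rewrite -Cj -Cj'.
Qed.

Lemma card_cycles_at_le T i j : stable s T -> #|cycles_at T i j| <= #|T|.
Proof.
move=> st; apply: leq_trans (leq_imset_card (porbit (perm_point s)) T).
apply: subset_leq_card; apply/subsetP => C; rewrite inE => /andP[Cs /and3P[CT _ _]].
have [p pC] := porbits_nonempty Cs; apply/imsetP; exists p; first exact: (subsetP CT).
by rewrite (porbit_of_mem Cs pC).
Qed.

Section BoundedTypes.
Variable N : nat.

(* A cycle type with cycles of length at most N records, for each block i
   and each length j.+1 <= N, the number mu (i, j) of such cycles. *)
Definition slot := ('I_m * 'I_N)%type.

Definition has_type (mu : {ffun slot -> 'I_N.+1}) (T : {set point d}) : bool :=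
  [&& stable s T,
      [forall C in porbits (perm_point s), (C \subset T) ==> (#|C| <= N)] &
      [forall ij : slot, #|cycles_at T ij.1 ij.2.+1| == mu ij]].

Definition type_count (mu : {ffun slot -> 'I_N.+1}) (i : 'I_m) (j : nat) : nat :=
  if j is j'.+1 then
    if @insub nat (fun x => x < N) 'I_N j' is Some o then val (mu (i, o)) else 0
  else 0.

Lemma card_cycles_in_slice mu T i j :
  has_type mu T -> #|cycles_in (s i) (slice T i) j| = type_count mu i j.
Proof.
case/and3P => st /forall_inP short /forallP count.
rewrite -card_cycles_at /type_count; case: j => [|j].
  apply/eqP; rewrite cards_eq0; apply/eqP/setP => C; rewrite !inE.
  apply/negbTE/negP => /andP[Cs /and3P[_ _ /eqP C0]].
  by have [p pC] := porbits_nonempty Cs; rewrite (cards0_eq C0) inE in pC.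
case: insubP => [o jN oj|jN]; first by move: (count (i, o)) => /= /eqP; rewrite oj.
apply/eqP; rewrite cards_eq0; apply/eqP/setP => C; rewrite !inE.
apply/negbTE/negP => /andP[Cs /and3P[CT _ /eqP Cj]].
by move: (short C Cs); rewrite CT Cj; apply/negP.
Qed.

Lemma has_type_unique mu1 mu2 T : has_type mu1 T -> has_type mu2 T -> mu1 = mu2.
Proof.
case/and3P => _ _ /forallP H1; case/and3P => _ _ /forallP H2.
apply/ffunP => ij; apply/val_inj.
by move: (H1 ij) (H2 ij) => /eqP -> /eqP.
Qed.

Lemma exists_type T : stable s T -> #|T| <= N -> exists mu, has_type mu T.
Proof.
move=> st TN.
exists [ffun ij : slot => inord #|cycles_at T ij.1 ij.2.+1| : 'I_N.+1].
apply/and3P; split=> //.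
  apply/forall_inP => C Cs; apply/implyP => CT.
  exact: leq_trans (subset_leq_card CT) TN.
apply/forallP => ij; rewrite ffunE inordK //.
by rewrite ltnS (leq_trans (card_cycles_at_le _ _ st)).
Qed.

(* A set of a given type is the union of a choice, for each slot (i, j),
   of mu (i, j) among the cycles of length j.+1 of s in block i. *)
Definition type_family (T : {set point d}) : {ffun slot -> {set {set point d}}} :=
  [ffun ij : slot => cycles_at T ij.1 ij.2.+1].

Definition type_choice (mu : {ffun slot -> 'I_N.+1}) (ij : slot) :
  pred {set {set point d}} :=
  fun O => (O \subset cycles_at setT ij.1 ij.2.+1) && (#|O| == mu ij).

Definition family_cover (f : {ffun slot -> {set {set point d}}}) : {set point d} :=
  \bigcup_(ij : slot) \bigcup_(C in f ij) C.

Lemma type_familyK mu T : has_type mu T -> family_cover (type_family T) = T.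
Proof.
case/and3P => st /forall_inP short _.
apply/setP => p; apply/bigcupP/idP.
  case=> ij _ /bigcupP[C]; rewrite ffunE inE => /andP[_ /and3P[CT _ _]].
  exact: (subsetP CT).
move=> pT; set C := porbit (perm_point s) p.
have CT : C \subset T by exact: stable_porbit.
have Cs : C \in porbits (perm_point s) by exact: imset_f.
have cN := short C Cs; rewrite CT /= in cN.
have c0 : 0 < #|C| by rewrite lt0n card_porbit_neq0.
have jN : #|C|.-1 < N by rewrite prednK.
exists (tag p, Ordinal jN) => //; apply/bigcupP; exists C; last exact: porbit_id.
rewrite ffunE inE Cs CT /= prednK // eqxx andbT.
by apply/subsetP => q qC; rewrite inE (tag_porbit qC).
Qed.

Lemma type_family_choice mu T : has_type mu T -> type_family T \in family (type_choice mu).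
Proof.
case/and3P => _ _ /forallP count; apply/familyP => ij.
rewrite ffunE unfold_in /= count andbT.
by apply/subsetP => C; rewrite !inE => /andP[-> /and3P[_ -> ->]]; rewrite subsetT.
Qed.

Lemma family_cover_porbit f (C : {set point d}) mu : f \in family (type_choice mu) ->
  C \in porbits (perm_point s) -> C \subset family_cover f -> exists ij, C \in f ij.
Proof.
move=> /familyP fmu Cs Cf; have [p pC] := porbits_nonempty Cs.
have /bigcupP[ij _ /bigcupP[C' C'f pC']] := subsetP Cf p pC.
exists ij; suff -> : C = C' by [].
move: (fmu ij); rewrite unfold_in => /andP[/subsetP /(_ C' C'f)]; rewrite inE.
by case/andP => C's _ _; rewrite -(porbit_of_mem Cs pC) (porbit_of_mem C's pC').
Qed.

Lemma family_coverK mu f : f \in family (type_choice mu) ->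
  type_family (family_cover f) = f.
Proof.
move=> fmu; have /familyP fmu' := fmu.
have fsub ij (C : {set point d}) : C \in f ij -> C \in cycles_at setT ij.1 ij.2.+1.
  by move=> Cf; move: (fmu' ij); rewrite unfold_in => /andP[/subsetP /(_ C Cf) ? _].
apply/ffunP => ij; rewrite ffunE; apply/setP => C; apply/idP/idP.
  rewrite inE => /andP[Cs /and3P[CU Ci Cj]].
  have [ij' Cf] := family_cover_porbit fmu Cs CU.
  have CO : C \in cycles_at setT ij.1 ij.2.+1 by rewrite inE Cs Ci Cj subsetT.
  have [e1 e2] := cycles_at_inj (fsub _ _ Cf) CO.
  suff -> : ij = ij' by [].
  by case: ij' e1 e2 {Cf} => i1 j1; case: ij {CO Ci Cj} => i2 j2 /= -> [/val_inj ->].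
move=> Cf; have := fsub _ _ Cf; rewrite !inE => /andP[Cs /and3P[_ Ci Cj]].
rewrite Cs Ci Cj !andbT /=.
by apply/subsetP => p pC; apply/bigcupP; exists ij => //; apply/bigcupP; exists C.
Qed.

Lemma has_type_cover mu f : f \in family (type_choice mu) -> has_type mu (family_cover f).
Proof.
move=> fmu; have /familyP fmu' := fmu.
have fsub ij (C : {set point d}) : C \in f ij -> C \in cycles_at setT ij.1 ij.2.+1.
  by move=> Cf; move: (fmu' ij); rewrite unfold_in => /andP[/subsetP /(_ C Cf) ? _].
apply/and3P; split.
- apply/subsetP => _ /imsetP[p /bigcupP[ij _ /bigcupP[C Cf pC]] ->].
  apply/bigcupP; exists ij => //; apply/bigcupP; exists C => //.
  by have := fsub _ _ Cf; rewrite inE => /andP[Cs _]; exact: porbits_perm_closed.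
- apply/forall_inP => C Cs; apply/implyP => CU.
  have [ij Cf] := family_cover_porbit fmu Cs CU; have := fsub _ _ Cf.
  by rewrite inE => /andP[_ /and3P[_ _ /eqP ->]].
- apply/forallP => ij.
  have := congr1 (fun g : {ffun slot -> _} => g ij) (family_coverK fmu).
  by rewrite /= ffunE => ->; move: (fmu' ij); rewrite unfold_in => /andP[_].
Qed.

Lemma card_has_type mu :
  #|[set T | has_type mu T]| = \prod_(ij : slot) 'C(#|cycles_at setT ij.1 ij.2.+1|, mu ij).
Proof.
have inj : {in [set T | has_type mu T] &, injective type_family}.
  move=> T1 T2; rewrite !inE => H1 H2 E.
  by rewrite -(type_familyK H1) -(type_familyK H2) E.
rewrite -(card_in_imset inj).
transitivity #|family (type_choice mu)|.
  apply: eq_card => f; apply/imsetP/idP.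
    by case=> T; rewrite inE => HT ->; exact: type_family_choice.
  move=> fmu; exists (family_cover f); last by rewrite (family_coverK fmu).
  by rewrite inE has_type_cover.
rewrite card_family foldrE big_map big_enum /=; apply: eq_bigr => ij _.
by rewrite -cards_draws; apply: eq_card => O; rewrite inE unfold_in.
Qed.

End BoundedTypes.

End CycleTypes.


(** * The character as a combination of cycle-type counts *)

Section CharacterByType.
Local Open Scope ring_scope.
Variables (k : fieldType) (m : nat) (V : FIsharp_mod k m) (N : nat).

Lemma trace_idem_type (mu : {ffun slot m N -> 'I_N.+1}) (d d' : obj m)
    (s : Sd (m:=m) d) (s' : Sd (m:=m) d') (T : {set point d}) (T' : {set point d'}) :
  has_type s mu T -> has_type s' mu T' -> trace_idem V s T = trace_idem V s' T'.
Proof.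
move=> tyT tyT'.
have st : stable s T by case/and3P: tyT.
have st' : stable s' T' by case/and3P: tyT'.
have same i j : #|cycles_in (s i) (slice T i) j| = #|cycles_in (s' i) (slice T' i) j|.
  by rewrite (card_cycles_in_slice i j tyT) (card_cycles_in_slice i j tyT').
have same' i j : #|cycles_in (s' i) (slice T' i) j| = #|cycles_in (s i) (slice T i) j|.
  by rewrite same.
apply: (@trace_idem_transport _ _ V _ _ s s' T T'
   (fun i => cycle_match (s i) (slice T i) (s' i) (slice T' i))
   (fun i => cycle_match (s' i) (slice T' i) (s i) (slice T i))).
- by move=> i a aT; apply: cycle_match_out; rewrite inE.
- by move=> i b bT; apply: cycle_match_out; rewrite inE.
- move=> i a aT; have aX : a \in slice T i by rewrite inE.
  have [b [ab ba _]] := cycle_match_inv (stable_slice st) (stable_slice st') (same i) aX.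
  by exists b.
- move=> i b bT; have bY : b \in slice T' i by rewrite inE.
  have [a [ba ab _]] := cycle_match_inv (stable_slice st') (stable_slice st) (same' i) bY.
  by exists a.
- move=> i a aT; have aX : a \in slice T i by rewrite inE.
  exact: (cycle_match_perm (stable_slice st) (same i) aX).
Qed.

Lemma type_trace_value : exists v : {ffun slot m N -> 'I_N.+1} -> k,
  forall mu (d : obj m) (s : Sd d) (T : {set point d}),
    has_type s mu T -> trace_idem V s T = v mu.
Proof.
suff /fin_all_exists[v Hv] : forall mu : {ffun slot m N -> 'I_N.+1}, exists c : k,
  forall (d : obj m) (s : Sd d) (T : {set point d}), has_type s mu T -> trace_idem V s T = c.
  by exists v.
move=> mu; case: (classic (exists d (s : Sd (m:=m) d) (T : {set point d}), has_type s mu T)).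
  case=> d0 [s0 [T0 ty0]]; exists (trace_idem V s0 T0) => d s T ty.
  exact: trace_idem_type ty ty0.
by move=> untyped; exists 0 => d s T ty; case: untyped; exists d, s, T.
Qed.

Hypothesis idem_large : forall d (T : {set point d}), (N < #|T|)%N -> idem V T = 0.

(* Every T with a nonzero trace has exactly one type. *)
Lemma trace_idem_by_type d (s : Sd (m:=m) d) (T : {set point d}) :
  trace_idem V s T = \sum_(mu : {ffun slot m N -> 'I_N.+1} | has_type s mu T) trace_idem V s T.
Proof.
have [->|nz] := eqVneq (trace_idem V s T) 0; first by rewrite big1.
have st : stable s T by apply: contraR nz => /trace_idem_unstable ->.
have TN : (#|T| <= N)%N.
  rewrite leqNgt; apply: contra nz => /idem_large idem0.
  by rewrite /trace_idem idem0 mulmx0 mxtrace0.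
have [mu0 ty0] := exists_type st TN.
rewrite (eq_bigl (fun mu => mu == mu0)) ?big_pred1_eq // => mu.
by apply/idP/eqP => [ty|->//]; exact: has_type_unique ty ty0.
Qed.

Lemma character_by_type (v : {ffun slot m N -> 'I_N.+1} -> k) :
  (forall mu (d : obj m) (s : Sd d) (T : {set point d}),
     has_type s mu T -> trace_idem V s T = v mu) ->
  forall d (s : Sd (m:=m) d),
    character V s = \sum_(mu : {ffun slot m N -> 'I_N.+1}) v mu *+ #|[set T | has_type s mu T]|.
Proof.
move=> v_trace d s.
rewrite character_sum_trace_idem (eq_bigr _ (fun T _ => trace_idem_by_type s T)).
rewrite (exchange_big_dep predT) //=; apply: eq_bigr => mu _.
rewrite (eq_bigr (fun _ => v mu)) ?sumr_const; last by move=> T; apply: v_trace.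
by congr (_ *+ _); apply: eq_card => T; rewrite inE.
Qed.

End CharacterByType.

Section TypePolynomial.
Local Open Scope ring_scope.
Variables (k : fieldType) (m N : nat) (v : {ffun slot m N -> 'I_N.+1} -> k).

Definition type_poly : charpoly k m :=
  cp_sum (index_enum {ffun slot m N -> 'I_N.+1}) (fun mu =>
    cp_mul (cp_const (v mu))
      (cp_prod (index_enum (slot m N)) (fun ij => cp_binom (ij.1, val ij.2) (mu ij)))).

Lemma cp_eval_type_poly d (s : Sd (m:=m) d) :
  [pchar k] =i pred0 ->
  cp_eval type_poly s =
  \sum_(mu : {ffun slot m N -> 'I_N.+1}) v mu *+ #|[set T | has_type s mu T]|.
Proof.
move=> char0; rewrite cp_eval_sum; apply: eq_bigr => mu _.
rewrite cp_eval_mul cp_eval_const cp_eval_prod -mulr_natr card_has_type natr_prod.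
congr (_ * _); apply: eq_bigr => ij _.
by rewrite cp_eval_binom // /Xvar /= ncycles_cycles_at.
Qed.

End TypePolynomial.

Local Open Scope ring_scope.

Theorem proposition2p3 (k : fieldType) (m : nat) (V : FIsharp_mod k m) :
  [pchar k] =i pred0 ->
  fin_gen V ->
  exists P : charpoly k m,
    forall (d : obj m) (s : Sd d), character V s = cp_eval P s.
Proof.
move=> char0 fg.
have [N idem_large] := idem_eq0_large fg.
have [v v_trace] := type_trace_value V N.
exists (type_poly v) => d s.
by rewrite (character_by_type idem_large v_trace) cp_eval_type_poly.
Qed.
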